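(* The Waterfilling Mechanism (with exact bucketing) described in the context satisfies Non-Interference: for every nonempty finite set $S$ of analysts, every analyst $j\notin S$ (all analysts $l$ having workload $W_l$, weight $s_l>0$ and strategy $A_l$ with $W_l=W_lA_l^+A_l$ and every column of $A_l$ of $L_1$ norm $1$), and every $i\in S$, $\mathrm{Err}_i(S\cup\{j\})\le \mathrm{Err}_i(S)$.
   Context: Data are a vector $x\in\mathbb{R}^n$. Fix $\varepsilon>0$. Each analyst $l$ has a workload matrix $W_l$, a weight $s_l>0$ (entitled to budget $s_l\varepsilon$), and a strategy matrix $A_l$ chosen for $W_l$ alone by a selection step, with $W_l = W_lA_l^+A_l$ ($^+$ the Moore–Penrose pseudo-inverse) and every column of $A_l$ of $L_1$ norm $1$. Fix a norm $\|\cdot\|$ on row vectors. Waterfilling Mechanism for a collective $S$: maintain buckets $B$ (unit vectors $e$ with weights $f_B(e)>0$), initially empty; for each $l\in S$ and each nonzero row $v$ of $s_lA_l$, set $e=v/\|v\|$; if $e\in B$ increase $f_B(e)$ by $\|v\|$, else add $e$ with $f_B(e)=\|v\|$. The joint strategy $A$ has rows $f_B(e)e$, $e\in B$. With $\varepsilon_S=(\sum_{l\in S}s_l)\varepsilon$, release $y=Ax+\eta$, $\eta$ i.i.d. Laplace of scale $\|A\|_1/\varepsilon_S$ ($\|A\|_1$ = maximum column $L_1$ norm). Analyst $i$ estimates $W_ix$ by $W_iA^+y$, with expected error $\mathrm{Err}_i(S)=\frac{2\|A\|_1^2}{\varepsilon_S^2}\|W_iA^+\|_F^2$. *)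

From mathcomp Require Import all_boot all_order all_algebra.
From mathcomp Require Import boolp reals.
Set Implicit Arguments. Unset Strict Implicit. Unset Printing Implicit Defensive.
Import Order.TTheory GRing.Theory Num.Theory.
Local Open Scope ring_scope.

Section Defs.
Variable R : realType.

Definition is_mp_pinv (p q : nat) (A : 'M[R]_(p, q)) (X : 'M[R]_(q, p)) : Prop :=
  [/\ A *m X *m A = A, X *m A *m X = X,
      (A *m X)^T = A *m X & (X *m A)^T = X *m A].

(* Moore-Penrose pseudo-inverse A^+ (it exists and is unique over the reals;
   the fallback 0 is never used). *)
Definition mp_pinv (p q : nat) (A : 'M[R]_(p, q)) : 'M[R]_(q, p) :=
  match pselect (exists X, is_mp_pinv A X) with
  | left h => projT1 (cid h)
  | right _ => 0
  end.

Definition is_norm (n : nat) (N : 'rV[R]_n -> R) : Prop :=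
  [/\ forall v, 0 <= N v,
      forall v, N v = 0 -> v = 0,
      forall (a : R) v, N (a *: v) = `|a| * N v
    & forall u v, N (u + v) <= N u + N v].

Definition mx_norm1 (p q : nat) (A : 'M[R]_(p, q)) : R :=
  \big[Num.max/0]_(c < q) \sum_(r < p) `|A r c|.

Definition frob2 (p q : nat) (M : 'M[R]_(p, q)) : R :=
  \sum_(r < p) \sum_(c < q) M r c ^+ 2.

Variable n : nat.
Variable N : 'rV[R]_n -> R.

(* Buckets: a list of (unit vector e, weight f_B(e)) with distinct e's. *)
Definition bucket_insert (B : seq ('rV[R]_n * R)) (v : 'rV[R]_n)
  : seq ('rV[R]_n * R) :=
  if v == 0 then B else
  let e := (N v)^-1 *: v in
  if e \in unzip1 B then
    map (fun p => if p.1 == e then (p.1, p.2 + N v) else p) B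
  else rcons B (e, N v).

Variables (I : finType) (k : I -> nat) (A : forall l, 'M[R]_(k l, n)) (s : I -> R).

Definition bucket_analyst (B : seq ('rV[R]_n * R)) (l : I) :=
  foldl (fun B' (r : 'I_(k l)) => bucket_insert B' (row r (s l *: A l)))
        B (enum 'I_(k l)).

Definition waterfill_buckets (S : {set I}) : seq ('rV[R]_n * R) :=
  foldl bucket_analyst [::] (enum S).

Definition joint_strategy (S : {set I}) :
  'M[R]_(size (waterfill_buckets S), n) :=
  \matrix_(i < size (waterfill_buckets S))
     let p := nth (0, 0) (waterfill_buckets S) i in p.2 *: p.1.

Variables (eps : R) (m : I -> nat) (W : forall l, 'M[R]_(m l, n)).

Definition eps_of (S : {set I}) : R := (\sum_(l in S) s l) * eps.

Definition Err (S : {set I}) (i : I) : R :=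
  2 * mx_norm1 (joint_strategy S) ^+ 2 / eps_of S ^+ 2
    * frob2 (W i *m mp_pinv (joint_strategy S)).

End Defs.

(* Both collectives S and S + j pay the same noise prefactor: each column of
   the joint strategy has L1 norm sum_(l in S) s_l, which cancels against
   eps_S, so Err_i(S) = 2/eps^2 * ||W_i A_S^+||_F^2.  Adding analyst j only
   increases the bucket weights f_B(e), so each row f_S(e) e of A_S is a row
   of A_(S+j) scaled by f_S(e)/f_(S+j)(e) <= 1; as W_i lies in the row space
   of A_S, any X with X A_S = W_i yields X' with X' A_(S+j) = W_i and
   ||X'||_F <= ||X||_F.  Finally W_i A^+ is the minimum-Frobenius-norm
   solution of Y A = W_i, because A A^+ is an orthogonal projection. *)

From mathcomp Require Import all_boot all_order all_algebra.
From mathcomp Require Import boolp reals.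
From mathcomp Require Import ring.
Set Implicit Arguments. Unset Strict Implicit. Unset Printing Implicit Defensive.
Import Order.TTheory GRing.Theory Num.Theory.
Local Open Scope ring_scope.

Lemma mulmx_tr_unitmx (R : realFieldType) (r q : nat) (F : 'M[R]_(r, q)) :
  row_free F -> F *m F^T \in unitmx.
Proof.
move=> freeF; rewrite -row_free_unit -kermx_eq0; apply/eqP.
set K := kermx _; have KFF : K *m (F *m F^T) = 0 by apply/sub_kermxP.
suff KF : K *m F = 0 by apply: (row_free_inj freeF); rewrite KF mul0mx.
apply/matrixP => a c; rewrite mxE.
have : ((K *m F) *m (K *m F)^T) a a = 0.
  by rewrite trmx_mul mulmxA -(mulmxA K) KFF mul0mx mxE.
rewrite mxE => /eqP; rewrite psumr_eq0 => [|b _]; last by rewrite !mxE sqr_ge0.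
by move=> /allP /(_ c (mem_index_enum c)) /implyP /(_ isT); rewrite !mxE sqrf_eq0 => /eqP.
Qed.

Section PseudoInverse.
Variable R : realType.

Lemma is_mp_pinv_rank_factor (p q r : nat) (C : 'M[R]_(p, r)) (F : 'M[R]_(r, q)) :
  row_free C^T -> row_free F ->
  is_mp_pinv (C *m F) (F^T *m invmx (F *m F^T) *m invmx (C^T *m C) *m C^T).
Proof.
move=> freeC freeF.
have unitG := mulmx_tr_unitmx freeF; have := mulmx_tr_unitmx freeC.
rewrite trmxK => unitH.
set G := F *m F^T in unitG *; set H := C^T *m C in unitH *.
have invG_tr : (invmx G)^T = invmx G by rewrite trmx_inv /G trmx_mul trmxK.
have invH_tr : (invmx H)^T = invmx H by rewrite trmx_inv /H trmx_mul trmxK.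
have cancelG t (Y : 'M[R]_(t, r)) : Y *m F *m F^T *m invmx G = Y.
  by rewrite -!mulmxA (mulmxA F) mulmxV // mulmx1.
have cancelH t (Y : 'M[R]_(t, r)) : Y *m invmx H *m C^T *m C = Y.
  by rewrite -!mulmxA -/H mulVmx // mulmx1.
split; rewrite !mulmxA.
- by rewrite cancelG cancelH.
- by rewrite cancelH cancelG.
- by rewrite cancelG !trmx_mul trmxK invH_tr mulmxA.
- by rewrite cancelH !trmx_mul trmxK invG_tr !mulmxA.
Qed.

Lemma mp_pinvP (p q : nat) (M : 'M[R]_(p, q)) : is_mp_pinv M (mp_pinv M).
Proof.
rewrite /mp_pinv; case: pselect => [h|[]]; first exact: (projT2 (cid h)).
rewrite -{1}(mulmx_base M); eexists; apply: is_mp_pinv_rank_factor.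
  by rewrite /row_free mxrank_tr; apply: col_base_full.
exact: row_base_free.
Qed.

Lemma mp_pinv_mulmxK (t p q : nat) (M : 'M[R]_(p, q)) (W : 'M[R]_(t, q)) :
  (W <= M)%MS -> W *m mp_pinv M *m M = W.
Proof.
case/submxP => D ->; have [MPM _ _ _] := mp_pinvP M.
by rewrite -!mulmxA (mulmxA M) MPM.
Qed.

Lemma frob2_tr (p q : nat) (M : 'M[R]_(p, q)) : frob2 M = \tr (M *m M^T).
Proof.
rewrite /frob2 /mxtrace; apply: eq_bigr => a _; rewrite mxE.
by apply: eq_bigr => c _; rewrite !mxE expr2.
Qed.

Lemma frob2_ge0 (p q : nat) (M : 'M[R]_(p, q)) : 0 <= frob2 M.
Proof. by do 2!apply: sumr_ge0 => ? _; apply: sqr_ge0. Qed.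

Lemma frob2_mulmx_proj_le (t p : nat) (X : 'M[R]_(t, p)) (Q : 'M[R]_p) :
  Q *m Q = Q -> Q^T = Q -> frob2 (X *m Q) <= frob2 X.
Proof.
move=> QQ Q_tr; set P := 1%:M - Q.
have PP : P *m P = P by rewrite mulmxBl !mulmxBr !mul1mx mulmx1 QQ subrr subr0.
have P_tr : P^T = P by rewrite linearB /= trmx1 Q_tr.
suff -> : frob2 X = frob2 (X *m Q) + frob2 (X *m P) by rewrite lerDl frob2_ge0.
rewrite !frob2_tr !trmx_mul Q_tr P_tr !mulmxA -!(mulmxA X _ _) QQ PP -linearD /=.
by rewrite -mulmxDr -mulmxDl addrC subrK mul1mx.
Qed.

Lemma frob2_mp_pinv_min (t p q : nat) (M : 'M[R]_(p, q)) (X : 'M[R]_(t, p)) Y :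
  X *m M = Y -> frob2 (Y *m mp_pinv M) <= frob2 X.
Proof.
move=> <-; have [MPM _ MP_tr _] := mp_pinvP M.
by rewrite -mulmxA frob2_mulmx_proj_le // mulmxA MPM.
Qed.

End PseudoInverse.

Lemma bigmax_ord_const (R : realDomainType) (n : nat) (x : R) :
  0 <= x -> \big[Num.max/0]_(c < n) x = x *+ (0 < n)%N.
Proof.
move=> x_ge0; elim: n => [|n IH]; first by rewrite big_ord0.
by rewrite big_ord_recl IH; case: n {IH} => [|n] /=; rewrite ?max_l ?maxxx.
Qed.

Section Buckets.
Variables (R : realType) (n : nat) (N : 'rV[R]_n -> R).
Hypothesis normN : is_norm N.
Local Notation buckets := (seq ('rV[R]_n * R)).

Definition unit_dir (v : 'rV[R]_n) := (N v)^-1 *: v.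
Definition buckets_wf (B : buckets) := uniq (unzip1 B) && all (fun p => 0 < p.2) B.
Definition bucket_weight (B : buckets) e := \sum_(p <- B | p.1 == e) p.2.
Definition bucket_colsum (B : buckets) c := \sum_(p <- B) p.2 * `|p.1 0 c|.

Lemma norm_gt0 v : v != 0 -> 0 < N v.
Proof.
case: normN => N_ge0 N_eq0 _ _ v_neq0; rewrite lt_def N_ge0 andbT.
by apply: contra v_neq0 => /eqP /N_eq0 ->.
Qed.

Lemma sum_bucket_key (B : buckets) d (F : 'rV[R]_n -> R) :
  uniq (unzip1 B) -> d \in unzip1 B -> \sum_(p <- B | p.1 == d) F p.1 = F d.
Proof.
move=> uniqB dB; rewrite (eq_bigr (fun=> F d)) => [|p /eqP -> //].
by rewrite big_const_seq -(count_map fst (pred1 d)) count_uniq_mem // dB /= addr0.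
Qed.

Lemma bucket_insert_wf B v : buckets_wf B -> buckets_wf (bucket_insert N B v).
Proof.
move=> wfB; case/andP: (wfB) => uniqB posB; rewrite /bucket_insert.
have [//|v_neq0] := eqVneq v 0.
have Nv_gt0 := norm_gt0 v_neq0.
case: ifP => dB; apply/andP; split.
- by rewrite /unzip1 -map_comp (eq_map (g := fst)) // => p /=; case: ifP.
- apply/allP => _ /mapP [p pB ->]; have := allP posB p pB.
  by case: ifP => //= _ p_gt0; rewrite ltr_wpDr ?ltW.
- by rewrite /unzip1 map_rcons rcons_uniq dB.
- by rewrite all_rcons Nv_gt0.
Qed.

Lemma bucket_insert_weight B v e : buckets_wf B ->
  bucket_weight (bucket_insert N B v) e
  = bucket_weight B e + (if (v != 0) && (unit_dir v == e) then N v else 0).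
Proof.
case/andP => uniqB _; rewrite /bucket_insert /bucket_weight.
have [_|v_neq0] := eqVneq v 0; first by rewrite addr0.
case: ifP => dB; last by rewrite big_rcons /=.
rewrite big_map (eq_bigl (fun p => p.1 == e)) => [|p]; last by case: ifP.
rewrite (eq_bigr (fun p => p.2 + (if p.1 == unit_dir v then N v else 0))) => [|p _].
  rewrite big_split /=; congr (_ + _).
  have [<-|d_neq_e] := eqVneq (unit_dir v) e.
    by rewrite (sum_bucket_key (fun d => if d == unit_dir v then N v else 0)) ?eqxx.
  by rewrite big1 // => p /eqP ->; rewrite eq_sym (negPf d_neq_e).
by case: ifP => _; rewrite ?addr0.
Qed.

Lemma bucket_insert_colsum B v c : buckets_wf B ->
  bucket_colsum (bucket_insert N B v) c = bucket_colsum B c + `|v 0 c|.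
Proof.
case/andP => uniqB _; rewrite /bucket_insert /bucket_colsum.
have [->|v_neq0] := eqVneq v 0; first by rewrite mxE normr0 addr0.
have unit_dir_col : N v * `|unit_dir v 0 c| = `|v 0 c|.
  rewrite mxE normrM ger0_norm ?invr_ge0 ?ltW ?norm_gt0 // mulrA.
  by rewrite mulfV ?mul1r // gt_eqF ?norm_gt0.
case: ifP => dB; last by rewrite -cats1 big_cat big_seq1 /= unit_dir_col.
rewrite big_map (eq_bigr (fun p : 'rV_n * R => p.2 * `|p.1 0 c| +
  (if p.1 == unit_dir v then N v * `|p.1 0 c| else 0))) => [|p _]; last first.
  by case: ifP => _ /=; rewrite ?addr0 // mulrDl.
rewrite big_split /= -big_mkcond /=.
by rewrite (sum_bucket_key (fun d => N v * `|d 0 c|)) ?unit_dir_col.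
Qed.

Lemma foldl_bucket_insert_wf B vs :
  buckets_wf B -> buckets_wf (foldl (bucket_insert N) B vs).
Proof. by elim: vs B => //= v vs IH B wfB; apply/IH/bucket_insert_wf. Qed.

Lemma foldl_bucket_insert_weight B vs e : buckets_wf B ->
  bucket_weight (foldl (bucket_insert N) B vs) e
  = bucket_weight B e + \sum_(v <- vs | (v != 0) && (unit_dir v == e)) N v.
Proof.
elim: vs B => [|v vs IH] B wfB /=; first by rewrite big_nil addr0.
rewrite IH ?bucket_insert_wf // bucket_insert_weight // big_cons -addrA.
by case: ifP; rewrite ?add0r.
Qed.

Lemma foldl_bucket_insert_colsum B vs c : buckets_wf B ->
  bucket_colsum (foldl (bucket_insert N) B vs) c
  = bucket_colsum B c + \sum_(v <- vs) `|v 0 c|.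
Proof.
elim: vs B => [|v vs IH] B wfB /=; first by rewrite big_nil addr0.
by rewrite IH ?bucket_insert_wf // bucket_insert_colsum // big_cons addrA.
Qed.

(* [joint_strategy N A s S] is convertible to [bucket_mx (waterfill_buckets N A s S)]. *)
Definition bucket_mx (B : buckets) : 'M[R]_(size B, n) :=
  \matrix_(b < size B) let p := nth (0, 0) B b in p.2 *: p.1.
Definition bucket_key (B : buckets) (b : 'I_(size B)) := (nth (0, 0) B b).1.
Definition bucket_mass (B : buckets) (b : 'I_(size B)) := (nth (0, 0) B b).2.

Section BucketMatrix.
Variable B : buckets.
Hypothesis wfB : buckets_wf B.
Local Notation key := (@bucket_key B).
Local Notation mass := (@bucket_mass B).

Lemma row_bucket_mx b : row b (bucket_mx B) = mass b *: key b.
Proof. exact: rowK. Qed.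

Lemma bucket_mxE b c : bucket_mx B b c = mass b * key b 0 c.
Proof. by rewrite !mxE. Qed.

Lemma bucket_mass_gt0 b : 0 < mass b.
Proof. by case/andP: wfB => _ /allP; apply; rewrite mem_nth. Qed.

Lemma bucket_key_inj : injective key.
Proof.
case/andP: wfB => uniqB _ b1 b2; rewrite /bucket_key -!(nth_map _ 0) //.
by move/eqP; rewrite nth_uniq ?size_map // => /eqP /val_inj.
Qed.

Lemma big_bucket_key b0 (F : 'I_(size B) -> R) :
  \sum_(b | key b == key b0) F b = F b0.
Proof. by apply: big_pred1 => b; apply/eqP/eqP => [/bucket_key_inj|->]. Qed.

Lemma bucket_weightE e : bucket_weight B e = \sum_(b | key b == e) mass b.
Proof. by rewrite /bucket_weight (big_nth (0, 0)) big_mkord. Qed.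

Lemma bucket_weight_key b : bucket_weight B (key b) = mass b.
Proof. by rewrite bucket_weightE big_bucket_key. Qed.

Lemma bucket_weight_gt0_key e : 0 < bucket_weight B e -> exists b, key b = e.
Proof.
rewrite bucket_weightE; case: (pickP (fun b => key b == e)) => [b /eqP|none].
  by exists b.
by rewrite big_pred0 ?ltxx.
Qed.

Lemma bucket_mx_colsum c : \sum_b `|bucket_mx B b c| = bucket_colsum B c.
Proof.
rewrite /bucket_colsum (big_nth (0, 0)) big_mkord; apply: eq_bigr => b _.
by rewrite !mxE normrM gtr0_norm ?(bucket_mass_gt0 b).
Qed.

Lemma row_sub_bucket_mx v :
  0 < bucket_weight B (unit_dir v) -> (v <= bucket_mx B)%MS.
Proof.
have [->|v_neq0] := eqVneq v 0; first by rewrite sub0mx.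
case/bucket_weight_gt0_key => b key_b; apply: submx_trans (row_sub b _).
have Nv_gt0 := norm_gt0 v_neq0; have mass_gt0 := bucket_mass_gt0 b.
rewrite row_bucket_mx key_b /unit_dir scalerA eqmx_scale //.
by rewrite mulf_neq0 ?invr_eq0 ?gt_eqF.
Qed.

End BucketMatrix.

Section BucketTransfer.
Variables B B' : buckets.
Hypotheses (wfB : buckets_wf B) (wfB' : buckets_wf B').
Hypothesis weight_le : forall e, bucket_weight B e <= bucket_weight B' e.
Local Notation key := (@bucket_key B).
Local Notation key' := (@bucket_key B').
Local Notation mass := (@bucket_mass B).
Local Notation mass' := (@bucket_mass B').

Definition bucket_transfer : 'M[R]_(size B, size B') :=
  \matrix_(b, b') if key b == key' b' then mass b / mass' b' else 0.

Lemma bucket_key_transfer (b : 'I_(size B)) : exists b', key' b' = key b.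
Proof.
apply: bucket_weight_gt0_key; apply: lt_le_trans (weight_le _).
by rewrite bucket_weight_key ?bucket_mass_gt0.
Qed.

Lemma bucket_mass_le b b' : key b = key' b' -> mass b <= mass' b'.
Proof. by move=> eq_key; rewrite -bucket_weight_key // eq_key -bucket_weight_key. Qed.

Lemma bucket_mx_transfer : bucket_mx B = bucket_transfer *m bucket_mx B'.
Proof.
apply/matrixP => b c; have [b' key_b'] := bucket_key_transfer b.
rewrite bucket_mxE // mxE (bigD1 b') //= big1 => [|b'' ne_b''].
  rewrite bucket_mxE // mxE key_b' eqxx addr0 mulrA divfK //.
  by rewrite gt_eqF ?bucket_mass_gt0.
rewrite mxE -key_b'; case: ifP => [/eqP/bucket_key_inj eq_b''|_]; last by rewrite mul0r.
by move: ne_b''; rewrite eq_b'' ?eqxx.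
Qed.

Lemma frob2_mul_bucket_transfer_le q (X : 'M[R]_(q, size B)) :
  frob2 (X *m bucket_transfer) <= frob2 X.
Proof.
apply: ler_sum => a _.
have entry b' : (X *m bucket_transfer) a b'
    = \sum_(b | key b == key' b') X a b * (mass b / mass' b').
  rewrite mxE [RHS]big_mkcond; apply: eq_bigr => b _; rewrite mxE.
  by case: ifP; rewrite ?mulr0.
apply: (@le_trans _ _ (\sum_b' \sum_(b | key b == key' b') X a b ^+ 2)).
  apply: ler_sum => b' _; rewrite entry.
  case: (pickP (fun b => key b == key' b')) => [b0 /eqP key_b0|none]; last first.
    by rewrite !big_pred0 // expr0n.
  rewrite -key_b0 !big_bucket_key // exprMn ler_piMr ?sqr_ge0 // expr_le1 //.
    by rewrite ler_pdivrMr ?bucket_mass_gt0 // mul1r bucket_mass_le.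
  by rewrite divr_ge0 // ltW ?bucket_mass_gt0.
rewrite (exchange_big_dep xpredT) //=; apply: ler_sum => b _.
have [b' key_b'] := bucket_key_transfer b.
by rewrite (eq_bigl (fun b'' => key' b'' == key' b')) => [|b''];
  rewrite ?big_bucket_key // key_b' eq_sym.
Qed.

End BucketTransfer.

End Buckets.

Section Waterfilling.
Variables (R : realType) (n : nat) (N : 'rV[R]_n -> R).
Hypothesis normN : is_norm N.
Variables (I : finType) (k : I -> nat) (A : forall l, 'M[R]_(k l, n)) (s : I -> R).

Definition analyst_rows l := [seq row r (s l *: A l) | r <- enum 'I_(k l)].

Lemma waterfill_bucketsE S : waterfill_buckets N A s S
  = foldl (bucket_insert N) [::] (flatten [seq analyst_rows l | l <- enum S]).
Proof.
rewrite /waterfill_buckets; elim: (enum S) [::] => //= l ls IH B.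
rewrite foldl_cat -IH; congr foldl.
by rewrite /bucket_analyst /analyst_rows; elim: (enum _) B => /=.
Qed.

Lemma waterfill_buckets_wf S : buckets_wf (waterfill_buckets N A s S).
Proof. by rewrite waterfill_bucketsE; apply: foldl_bucket_insert_wf. Qed.

Lemma waterfill_weight S e :
  bucket_weight (waterfill_buckets N A s S) e
  = \sum_(l in S) \sum_(v <- analyst_rows l | (v != 0) && (unit_dir N v == e)) N v.
Proof.
rewrite waterfill_bucketsE foldl_bucket_insert_weight //.
by rewrite /bucket_weight big_nil add0r big_flatten big_map big_enum.
Qed.

Lemma waterfill_weight_subset (S S' : {set I}) e : S \subset S' ->
  bucket_weight (waterfill_buckets N A s S) e
  <= bucket_weight (waterfill_buckets N A s S') e.
Proof.
move=> subS; rewrite !waterfill_weight [leRHS](big_setID S) (setIidPr subS) /=.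
rewrite lerDl; do 2!apply: sumr_ge0 => ? _; by case: normN.
Qed.

Lemma scaled_strategy_sub_joint_strategy (S : {set I}) i :
  i \in S -> (s i *: A i <= joint_strategy N A s S)%MS.
Proof.
move=> iS; apply/row_subP => r; set v := row r _.
have [->|v_neq0] := eqVneq v 0; first exact: sub0mx.
apply: (row_sub_bucket_mx normN (waterfill_buckets_wf S)).
have N_ge0 : forall u, 0 <= N u by case: normN.
have sum_ge0 (us : seq 'rV_n) P : 0 <= \sum_(u <- us | P u) N u.
  by apply: sumr_ge0 => u _.
rewrite waterfill_weight (bigD1 i) //= ltr_wpDr ?sumr_ge0 //.
have v_row : v \in analyst_rows i by apply/mapP; exists r; rewrite ?mem_enum.
by rewrite (big_rem v v_row) eqxx v_neq0 ltr_wpDr ?norm_gt0.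
Qed.

Lemma joint_strategy_transfer (S S' : {set I}) : S \subset S' ->
  joint_strategy N A s S = bucket_transfer (waterfill_buckets N A s S)
    (waterfill_buckets N A s S') *m joint_strategy N A s S'.
Proof.
by move=> subS; apply: bucket_mx_transfer; rewrite ?waterfill_buckets_wf // => e;
  apply: waterfill_weight_subset.
Qed.

Hypothesis s_gt0 : forall l, 0 < s l.
Hypothesis A_col_norm1 : forall l (c : 'I_n), \sum_(r < k l) `|A l r c| = 1.

Lemma waterfill_colsum (S : {set I}) c :
  bucket_colsum (waterfill_buckets N A s S) c = \sum_(l in S) s l.
Proof.
rewrite waterfill_bucketsE foldl_bucket_insert_colsum //.
rewrite /bucket_colsum big_nil add0r big_flatten big_map big_enum.
apply: eq_bigr => l _; rewrite big_map big_enum -[RHS]mulr1 -(A_col_norm1 l c).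
by rewrite big_distrr; apply: eq_bigr => r _; rewrite !mxE normrM gtr0_norm.
Qed.

Lemma mx_norm1_joint_strategy (S : {set I}) :
  mx_norm1 (joint_strategy N A s S) = (\sum_(l in S) s l) *+ (0 < n)%N.
Proof.
rewrite /mx_norm1 (eq_bigr (fun=> \sum_(l in S) s l)) => [|c _].
  by rewrite bigmax_ord_const // sumr_ge0 // => l _; apply: ltW.
by rewrite bucket_mx_colsum ?waterfill_buckets_wf ?waterfill_colsum.
Qed.

Variables (eps : R) (m : I -> nat) (W : forall l, 'M[R]_(m l, n)).
Hypothesis eps_gt0 : 0 < eps.
Hypothesis W_pinvK : forall l, W l = W l *m mp_pinv (A l) *m A l.

(* For n = 0 both ||A||_1 and the error vanish. *)
Lemma ErrE (S : {set I}) i : S != set0 ->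
  Err N A s eps W S i
  = 2 / eps ^+ 2 *+ (0 < n)%N * frob2 (W i *m mp_pinv (joint_strategy N A s S)).
Proof.
case/set0Pn => l0 l0S; rewrite /Err /eps_of mx_norm1_joint_strategy.
have sum_gt0 : 0 < \sum_(l in S) s l.
  by rewrite (bigD1 l0) //= ltr_wpDr ?sumr_ge0 // => l _; apply: ltW.
case: (0 < n)%N; last by rewrite !mulr0n expr0n mulr0 mul0r.
by rewrite !mulr1n; congr (_ * _); field; rewrite !gt_eqF.
Qed.

Lemma workload_sub_joint_strategy (S : {set I}) i :
  i \in S -> (W i <= joint_strategy N A s S)%MS.
Proof.
move=> iS; apply: submx_trans (scaled_strategy_sub_joint_strategy iS).
by rewrite eqmx_scale ?gt_eqF // W_pinvK submxMl.
Qed.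

End Waterfilling.

Theorem mainTheorem3 (R : realType) (n : nat) (N : 'rV[R]_n -> R)
  (I : finType) (m k : I -> nat)
  (W : forall l, 'M[R]_(m l, n)) (A : forall l, 'M[R]_(k l, n))
  (s : I -> R) (eps : R) :
  is_norm N ->
  0 < eps ->
  (forall l, 0 < s l) ->
  (forall l, W l = W l *m mp_pinv (A l) *m A l) ->
  (forall l (c : 'I_n), \sum_(r < k l) `|A l r c| = 1) ->
  forall (S : {set I}) (j i : I),
    S != set0 -> j \notin S -> i \in S ->
    Err N A s eps W (j |: S) i <= Err N A s eps W S i.
Proof.
move=> normN eps_gt0 s_gt0 W_pinvK A_norm1 S j i S_neq0 _ iS.
have jS_neq0 : j |: S != set0 by apply/set0Pn; exists j; rewrite setU11.
have subS : S \subset j |: S := subsetUr _ _.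
rewrite !(ErrE normN s_gt0 A_norm1 W eps_gt0) //.
apply: ler_wpM2l; first by rewrite mulrn_wge0 // divr_ge0 ?sqr_ge0.
pose T := bucket_transfer (waterfill_buckets N A s S) (waterfill_buckets N A s (j |: S)).
set X := W i *m mp_pinv (joint_strategy N A s S).
apply: le_trans (frob2_mp_pinv_min (X := X *m T) _) _.
  rewrite -mulmxA -(joint_strategy_transfer normN) //.
  exact/mp_pinv_mulmxK/(workload_sub_joint_strategy normN s_gt0).
apply: frob2_mul_bucket_transfer_le; rewrite ?waterfill_buckets_wf // => e.
exact: waterfill_weight_subset.
Qed.
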